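(* Let $\alpha>0$, $\beta\ge0$, $h>0$, and $V'(h)>0$. Set $b=\beta/h^2$. For $\theta\in(0,2\pi)$, consider the complex quadratic equation in $z$ $$z^2+z\big(\alpha-b(e^{i\theta}-1)\big)-\alpha V'(h)\,(e^{i\theta}-1)=0 .$$ If $\theta=\pi$, this equation has no purely imaginary root $z\in i\mathbb{R}$. If $\theta\neq\pi$, it has a purely imaginary root if and only if $$V'(h)=\frac{\alpha}{2\cos^2(\theta/2)}+b+2\tan^2(\theta/2)\, b\left(\frac{b}{\alpha}+1\right).$$
   Context: This quadratic is the characteristic equation obtained by substituting Fourier modes $y_n(t)=\exp(i\theta n+zt)$ into the linearization $$\ddot y_n=\alpha\big(V'(h)(y_{n+1}-y_n)-\dot y_n\big)+\frac{\beta}{h^2}(\dot y_{n+1}-\dot y_n)$$ of the single-lane model $$\dot x_n=v_n,\qquad \dot v_n=\alpha(V(x_{n+1}-x_n)-v_n)+\beta\frac{v_{n+1}-v_n}{(x_{n+1}-x_n)^2}$$ around the uniform flow with headway $h$. Here $V$ is a differentiable optimal velocity function. For a ring with $N$ vehicles, the admissible values are $\theta=a_k=2\pi k/N$. *)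

From mathcomp Require Import all_boot all_algebra.
From mathcomp Require Import all_classical all_reals all_analysis.
From mathcomp Require Export complex.
Export GRing.Theory Num.Theory ComplexField.
Local Open Scope ring_scope.
Local Open Scope complex_scope.

Definition expi {R : realType} (theta : R) : R[i] := cos theta +i* sin theta.

Definition charq {R : realType} (alpha b vp theta : R) (z : R[i]) : R[i] :=
  z ^+ 2 + z * (alpha%:C - b%:C * (expi theta - 1))
  - (alpha * vp)%:C * (expi theta - 1).

Definition purely_imaginary {R : realType} (z : R[i]) : Prop :=
  exists y : R, z = 'i * y%:C.

From mathcomp Require Import all_boot all_algebra.
From mathcomp Require Import all_classical all_reals all_analysis.
From mathcomp Require Import complex.
From mathcomp Require Import ring lra.
Import GRing.Theory Num.Theory ComplexField.
Local Open Scope ring_scope.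
Local Open Scope complex_scope.

(* On z = i y the imaginary part of the equation is linear in y, with the
   positive coefficient K = alpha + b (1 - cos theta); so it pins down
   y = alpha V'(h) sin theta / K, and the real part becomes a polynomial
   relation between V'(h), sin theta and cos theta.  For theta = pi it reads
   0 = 2 K^2, which is impossible; otherwise the half-angle formulas
   sin theta = 2 sin(theta/2) cos(theta/2), 1 - cos theta = 2 sin(theta/2)^2
   and sin^2 + cos^2 = 1 turn it into the stated formula for V'(h). *)

Lemma charq_imaginary (R : realType) (a b v th y : R) :
  charq a b v th ('i * y%:C) =
  (- y ^+ 2 + b * sin th * y + a * v * (1 - cos th)) +i*
  ((a + b * (1 - cos th)) * y - a * v * sin th).
Proof.
rewrite /charq /expi; apply/eqP; rewrite eq_complex /=.
by apply/andP; split; apply/eqP; ring.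
Qed.

Section ImaginaryRootCriterion.
Variable R : realFieldType.
Variables a b v s c : R.
Hypotheses (a_gt0 : 0 < a) (b_ge0 : 0 <= b) (v_gt0 : 0 < v) (c_le1 : c <= 1).

Lemma imaginary_root_criterion :
  (exists y, - y ^+ 2 + b * s * y + a * v * (1 - c) = 0 /\
             (a + b * (1 - c)) * y = a * v * s) <->
  a * v * s ^+ 2 = b * s ^+ 2 * (a + b * (1 - c)) + (1 - c) * (a + b * (1 - c)) ^+ 2.
Proof.
set K := a + b * (1 - c).
have K_neq0 : K != 0.
  by apply: lt0r_neq0; rewrite /K ltr_wpDr // mulr_ge0 // subr_ge0.
have avK_neq0 : a * v / K ^+ 2 != 0.
  by rewrite mulf_neq0 ?invr_eq0 ?expf_neq0 // lt0r_neq0 // mulr_gt0.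
have re_at_root : let y := a * v * s / K in - y ^+ 2 + b * s * y + a * v * (1 - c)
    = a * v / K ^+ 2 * (b * s ^+ 2 * K + (1 - c) * K ^+ 2 - a * v * s ^+ 2).
  by rewrite /=; field.
split.
- move=> [y [re im]].
  have y_def : y = a * v * s / K by rewrite -im [K * y]mulrC mulfK.
  move: re; rewrite y_def re_at_root => /eqP.
  by rewrite mulf_eq0 (negbTE avK_neq0) /= subr_eq0 => /eqP.
- move=> rel; exists (a * v * s / K); split; last by rewrite mulrC divfK.
  by rewrite re_at_root -rel subrr mulr0.
Qed.

End ImaginaryRootCriterion.

Lemma purely_imaginary_rootP (R : realType) (a b v th : R) :
  0 < a -> 0 <= b -> 0 < v ->
  (exists z, purely_imaginary z /\ charq a b v th z = 0) <->
  a * v * sin th ^+ 2 = b * sin th ^+ 2 * (a + b * (1 - cos th))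
                        + (1 - cos th) * (a + b * (1 - cos th)) ^+ 2.
Proof.
move=> a_gt0 b_ge0 v_gt0.
rewrite -imaginary_root_criterion ?cos_le1 //.
split.
- move=> [_ [[y ->]]]; rewrite charq_imaginary => /eqP.
  by rewrite eq_complex /= subr_eq0 => /andP[/eqP re /eqP im]; exists y.
- move=> [y [re im]]; exists ('i * y%:C); split; first by exists y.
  by rewrite charq_imaginary re im subrr.
Qed.

Lemma half_angle_relation (R : numFieldType) (a b v S C : R) :
  a != 0 -> S != 0 -> C != 0 -> S ^+ 2 + C ^+ 2 = 1 ->
  let K := a + b * (2 * S ^+ 2) in
  a * v * (2 * S * C) ^+ 2 = b * (2 * S * C) ^+ 2 * K + 2 * S ^+ 2 * K ^+ 2 <->
  v = a / (2 * C ^+ 2) + b + 2 * (S / C) ^+ 2 * b * (b / a + 1).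
Proof.
move=> a_neq0 S_neq0 C_neq0 pythagoras K.
have X_neq0 : a * (2 * S * C) ^+ 2 != 0.
  by rewrite !mulf_neq0 ?expf_neq0 ?mulf_neq0 ?pnatr_eq0.
(* The two forms of V'(h) differ by a multiple of S^2 + C^2 - 1. *)
have -> : a / (2 * C ^+ 2) + b + 2 * (S / C) ^+ 2 * b * (b / a + 1) =
          (b * (2 * S * C) ^+ 2 * K + 2 * S ^+ 2 * K ^+ 2) / (a * (2 * S * C) ^+ 2).
  apply/eqP; rewrite -subr_eq0; apply/eqP.
  transitivity (2 * b ^+ 2 * S ^+ 2 * (1 - (S ^+ 2 + C ^+ 2)) / (a * C ^+ 2)).
    by rewrite /K; field; rewrite C_neq0 a_neq0 S_neq0.
  by rewrite pythagoras subrr mulr0 mul0r.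
split=> [<- | ->].
- by rewrite [a * v]mulrC -[v * a * _]mulrA mulfK.
- by rewrite mulrAC mulrC divfK.
Qed.

Lemma sin_double_half (R : realType) (x : R) :
  sin x = 2 * sin (x / 2) * cos (x / 2).
Proof. by rewrite [in LHS](splitr x) sinD; ring. Qed.

Lemma one_minus_cos_double_half (R : realType) (x : R) :
  1 - cos x = 2 * sin (x / 2) ^+ 2.
Proof.
by rewrite [in LHS](splitr x) cosD; have := cos2Dsin2 (x / 2); nra.
Qed.

Lemma cos_half_neq0 (R : realType) (th : R) :
  0 < th < 2 * pi -> th <> pi -> cos (th / 2) != 0.
Proof.
move=> /andP[th_gt0 th_lt2pi] th_neq_pi; apply/eqP => cos0.
have pi_gt0 := pi_gt0 R.
suff : th / 2 = pi / 2 by move=> /(congr1 ( *%R^~ 2)); rewrite !divfK.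
by apply: cos_inj; rewrite ?cos0 ?cos_pihalf // !in_itv /=; apply/andP; split; lra.
Qed.

Theorem mainTheorem2 (R : realType) (V : R -> R) (alpha beta h theta : R) :
  0 < alpha -> 0 <= beta -> 0 < h ->
  derivable V h 1 -> 0 < derive1 V h ->
  0 < theta < 2 * pi ->
  let b := beta / h ^+ 2 in
  let vp := derive1 V h in
  (theta = pi ->
     ~ exists z : R[i], purely_imaginary z /\ charq alpha b vp theta z = 0) /\
  (theta <> pi ->
     ((exists z : R[i], purely_imaginary z /\ charq alpha b vp theta z = 0) <->
      vp = alpha / (2 * cos (theta / 2) ^+ 2) + b
           + 2 * tan (theta / 2) ^+ 2 * b * (b / alpha + 1))).
Proof.
move=> alpha_gt0 beta_ge0 h_gt0 _ vp_gt0 theta_range b vp.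
have b_ge0 : 0 <= b by rewrite divr_ge0 // sqr_ge0.
split=> [theta_pi | theta_neq_pi]; rewrite purely_imaginary_rootP //.
  rewrite theta_pi sinpi cospi expr0n /= !mulr0 mul0r add0r.
  have : 0 < alpha + b * (1 - -1) by lra.
  nra.
rewrite (sin_double_half _ theta) one_minus_cos_double_half /tan.
have sin_half_gt0 : 0 < sin (theta / 2).
  by case/andP: (theta_range) => *; apply: sin_gt0_pi; apply/andP; split; lra.
apply: half_angle_relation.
- exact: lt0r_neq0.
- exact: lt0r_neq0.
- exact: cos_half_neq0.
- by rewrite addrC cos2Dsin2.
Qed.
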